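(* Let $m\ge1$, $\alpha\in(0,1)$, let $F_1,\dots,F_m:[0,1]\to[0,1]$ and fix $t\in[0,1]$. Let $(F(t))_{(1)}\ge\dots\ge(F(t))_{(m)}$ denote the values $F_1(t),\dots,F_m(t)$ sorted decreasingly and, for $1\le j\le m$, $\tilde F_j(t)=1-\big(\prod_{j'=1}^{j}(1-(F(t))_{(j')})\big)^{1/j}$. For $\ell\in\{1,\dots,m\}$ and $i\in\{1,\dots,\lfloor\alpha\ell\rfloor+1\}$ consider $$Q(\ell,i)=P\Big(\mathbf{Bin}\big[m-\ell+i,\tilde F_{m-\ell+i}(t)\big]\ge i\Big)=P\Big(\mathbf{Bin}\big[m-\ell+i,1-\tilde F_{m-\ell+i}(t)\big]\le m-\ell\Big).$$ Then $Q(\ell,i)$ is non-increasing in $i\in\{1,\dots,\lfloor\alpha\ell\rfloor+1\}$ and non-increasing in $\ell\in\{1,\dots,m\}$.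
   Context: $\mathbf{Bin}[n,p]$ denotes a binomial random variable with $n$ trials and success probability $p$. *)

From mathcomp Require Import all_boot all_order all_algebra.
From mathcomp Require Import all_classical all_reals all_analysis.
Set Implicit Arguments. Unset Strict Implicit. Unset Printing Implicit Defensive.
Import Order.TTheory GRing.Theory Num.Theory.
Local Open Scope ring_scope.

Definition binom_tail_ge {R : realType} (n : nat) (p : R) (i : nat) : R :=
  \sum_(k < n.+1 | (i <= k)%N) ('C(n, k))%:R * p ^+ k * (1 - p) ^+ (n - k).

(* the values F_1(t),...,F_m(t) sorted decreasingly: (F(t))_(j) = nth 0 (sortedF F t) (j-1) *)
Definition sortedF {R : realType} {m : nat} (F : 'I_m -> R -> R) (t : R) : seq R :=
  sort (fun x y : R => y <= x) [seq F k t | k <- enum 'I_m].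

Definition tildeF {R : realType} {m : nat} (F : 'I_m -> R -> R) (t : R) (j : nat) : R :=
  1 - powR (\prod_(j' < j) (1 - nth 0 (sortedF F t) j')) (j%:R)^-1.

Definition Q {R : realType} {m : nat} (F : 'I_m -> R -> R) (t : R) (l i : nat) : R :=
  binom_tail_ge (m - l + i) (tildeF F t (m - l + i)) i.

From mathcomp Require Import all_boot all_order all_algebra.
From mathcomp Require Import all_classical all_reals all_analysis.
From mathcomp Require Import ring lra zify.
Set Implicit Arguments. Unset Strict Implicit. Unset Printing Implicit Defensive.
Import Order.TTheory GRing.Theory Num.Theory.
Local Open Scope ring_scope.

(* Q(l,i) is the tail P(Bin[n, 1 - g_n] >= i) with n = m - l + i, where g_n is
   the geometric mean of the n smallest failure probabilities 1 - (F(t))_(j).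
   These grow with j, hence so does g_n.
   Going from i to i + 1 adds a trial with a larger failure probability while
   asking for one more success; an extra trial adds at most one success.
   Going from l + 1 to l, write g_n^n = d^(n+1): the failure probabilities
   (g_n, ..., g_n, 1) and (d, ..., d) have the same product, and balancing two
   failure probabilities at fixed product raises every tail of the number of
   successes; finally g_(n+1) <= d. *)

Lemma nseqS_cat1 (T : Type) n (x : T) : nseq n.+1 x = nseq n x ++ [:: x].
Proof. by elim: n => //= n <-. Qed.

Definition is_prob {R : numDomainType} (p : R) := 0 <= p <= 1.

Section PoissonBinomialTail.
Variable R : realFieldType.

(* The probability of at least [i] successes in independent trials with
   success probabilities [ps] (a Poisson-binomial tail). *)
Fixpoint pbin_tail (ps : seq R) (i : nat) : R :=
  if ps is p :: ps' then p * pbin_tail ps' i.-1 + (1 - p) * pbin_tail ps' i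
  else (i == 0)%:R.

Lemma pbin_tail_leS ps i : all is_prob ps -> pbin_tail ps i.+1 <= pbin_tail ps i.
Proof.
elim: ps i => [|p ps IH] [|i] //= /andP[/andP[p_ge0 p_le1] ps01];
  by rewrite lerD // ler_wpM2l ?subr_ge0 // IH.
Qed.

Lemma pbin_tail_le_pred ps i : all is_prob ps -> pbin_tail ps i <= pbin_tail ps i.-1.
Proof. by case: i => [|i] ps01; [exact: lexx | exact: pbin_tail_leS]. Qed.

Lemma pbin_tail_le_cons p ps i :
  is_prob p -> all is_prob ps -> pbin_tail ps i <= pbin_tail (p :: ps) i.
Proof. by move=> /andP[? ?] /(pbin_tail_le_pred i) /=; nra. Qed.

Lemma pbin_tail_consS_le p ps i :
  is_prob p -> all is_prob ps -> pbin_tail (p :: ps) i.+1 <= pbin_tail ps i.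
Proof. by move=> /andP[? ?] /(pbin_tail_leS i) /=; nra. Qed.

Lemma pbin_tail_cons_homo p q ps i : all is_prob ps -> p <= q ->
  pbin_tail (p :: ps) i <= pbin_tail (q :: ps) i.
Proof. by move=> /(pbin_tail_le_pred i) /=; nra. Qed.

Lemma pbin_tail_cat2l pre s1 s2 : all is_prob pre ->
  (forall i, pbin_tail s1 i <= pbin_tail s2 i) ->
  forall i, pbin_tail (pre ++ s1) i <= pbin_tail (pre ++ s2) i.
Proof.
elim: pre => [|p pre IH] //= /andP[/andP[? ?] pre01] le12 i.
by have := IH pre01 le12 i; have := IH pre01 le12 i.-1; nra.
Qed.

Lemma is_prob1B (p : R) : is_prob p -> is_prob (1 - p).
Proof. by case/andP=> p_ge0 p_le1; rewrite /is_prob subr_ge0 p_le1 lerBlDr lerDl. Qed.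

Lemma all_is_prob_nseq n (p : R) : is_prob p -> all is_prob (nseq n p).
Proof. by move=> p01; rewrite all_nseq p01 orbT. Qed.

Lemma pbin_tail_nseq_homo n p q i : is_prob p -> is_prob q -> p <= q ->
  pbin_tail (nseq n p) i <= pbin_tail (nseq n q) i.
Proof.
move=> p01 q01 le_pq; elim: n i => [|n IH] i //=.
apply: le_trans (pbin_tail_cons_homo i (all_is_prob_nseq n q01) le_pq).
by apply: (pbin_tail_cat2l (pre := [:: p])) IH i; rewrite /= p01.
Qed.

(* In terms of the failure probabilities u, v of two trials, the tail is
   (1 - u - v + u v) (T(i-2) - T(i-1)) + T(i-1) + u v (T(i) - T(i-1)),
   where T is the tail of the other trials. *)
Lemma pbin_tail_balance u v u' v' ps i : all is_prob ps ->
  u * v = u' * v' -> u' + v' <= u + v ->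
  pbin_tail [:: 1 - u, 1 - v & ps] i <= pbin_tail [:: 1 - u', 1 - v' & ps] i.
Proof.
move=> ps01 uv_eq uv_le /=.
have := pbin_tail_le_pred i ps01; have := pbin_tail_le_pred i.-1 ps01.
move: (pbin_tail ps i.-1.-1) (pbin_tail ps i.-1) (pbin_tail ps i) => x y z le_yx le_zy.
have E a b : (1 - a) * ((1 - b) * x + (1 - (1 - b)) * y)
           + (1 - (1 - a)) * ((1 - b) * y + (1 - (1 - b)) * z)
         = (1 - a - b) * (x - y) + y + a * b * (x - 2 * y + z) by ring.
by rewrite !E uv_eq lerD2r lerD2r ler_wpM2r ?subr_ge0 //; lra.
Qed.

End PoissonBinomialTail.

Section PoissonBinomialSpread.
Variables (R : realFieldType) (n : nat) (c d : R).
Hypotheses (n_gt0 : (0 < n)%N) (c_ge0 : 0 <= c) (d_gt0 : 0 < d) (d_le1 : d <= 1).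
Hypothesis cn_eq_dSn : c ^+ n = d ^+ n.+1.

(* After k balancing steps the failure probabilities are d (k times), r k, and
   c (n - k times); the product c ^+ n is preserved at every step. *)
Let r k := (c / d) ^+ k.
Let stage k := nseq k (1 - d) ++ (1 - r k) :: nseq (n - k) (1 - c).

Let d_ge0 : 0 <= d := ltW d_gt0.

Let c_le_d : c <= d.
Proof.
rewrite -(ler_pXn2r n_gt0) ?nnegrE // cn_eq_dSn exprS.
by rewrite ler_piMl ?exprn_ge0.
Qed.

Let is_prob_1Bd : is_prob (1 - d).
Proof. by rewrite is_prob1B // /is_prob d_ge0. Qed.

Let is_prob_1Bc : is_prob (1 - c).
Proof. by rewrite is_prob1B // /is_prob c_ge0 (le_trans c_le_d). Qed.

Let r_n : r n = d.
Proof.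
by rewrite /r expr_div_n cn_eq_dSn exprS mulfK // expf_neq0 // gt_eqF.
Qed.

Let d_le_r k : (k <= n)%N -> d <= r k.
Proof. by move=> le_kn; rewrite -r_n ler_wiXn2l ?divr_ge0 ?ler_pdivrMr ?mul1r. Qed.

Let pbin_tail_stage_step k i :
  (k < n)%N -> pbin_tail (stage k) i <= pbin_tail (stage k.+1) i.
Proof.
move=> lt_kn; rewrite /stage -(subnSK lt_kn) (nseqS_cat1 k) -catA /=.
have r_Sk : r k.+1 * d = r k * c by rewrite /r exprSr; field; rewrite gt_eqF.
apply: pbin_tail_cat2l => [|j]; first exact: all_is_prob_nseq.
apply: pbin_tail_balance; first exact: all_is_prob_nseq.
  by rewrite -r_Sk mulrC.
have balance : 0 <= (r k - d) * (d - c).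
  by rewrite mulr_ge0 // subr_ge0 // d_le_r // ltnW.
rewrite -(ler_pM2r d_gt0) !mulrDl r_Sk; nra.
Qed.

Lemma pbin_tail_spread_gt0 i :
  pbin_tail (nseq n (1 - c)) i <= pbin_tail (nseq n.+1 (1 - d)) i.
Proof.
have stage0 : pbin_tail (stage 0) i = pbin_tail (nseq n (1 - c)) i.
  by rewrite /= /r expr0 subrr mul0r subr0 mul1r add0r subn0.
have stage_n : stage n = nseq n.+1 (1 - d) by rewrite /stage r_n subnn nseqS_cat1.
rewrite -stage0 -stage_n; elim: {1 3}n (leqnn n) => [|k IH] le_kn //.
exact: le_trans (IH (ltnW le_kn)) (pbin_tail_stage_step i le_kn).
Qed.

End PoissonBinomialSpread.

Lemma pbin_tail_spread (R : realFieldType) n (c d : R) i :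
  (0 < n)%N -> 0 <= c -> 0 <= d <= 1 -> c ^+ n = d ^+ n.+1 ->
  pbin_tail (nseq n (1 - c)) i <= pbin_tail (nseq n.+1 (1 - d)) i.
Proof.
move=> n_gt0 c_ge0 /andP[d_ge0 d_le1] cd.
have [d_gt0|d_le0] := ltP 0 d; first exact: pbin_tail_spread_gt0.
have d0 : d = 0 by apply/le_anti; rewrite d_le0.
have : c ^+ n == 0 by rewrite cd d0 expr0n.
rewrite expf_eq0 n_gt0 => /eqP c0.
have is_prob1 : is_prob (1 - 0 : R) by rewrite /is_prob subr0 ler01 lexx.
by rewrite c0 d0; apply: pbin_tail_le_cons => //; apply: all_is_prob_nseq.
Qed.

Section BinomialTail.
Variable R : realType.

Lemma binom_tail_geE n (p : R) i : binom_tail_ge n p i =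
  \sum_(k < n.+1) (i <= k)%N%:R * 'C(n, k)%:R * p ^+ k * (1 - p) ^+ (n - k).
Proof.
rewrite /binom_tail_ge big_mkcond /=; apply: eq_bigr => k _.
by case: ifP; rewrite ?mul1r ?mul0r.
Qed.

Lemma binom_tail_geS n (p : R) i : binom_tail_ge n.+1 p i =
  p * binom_tail_ge n p i.-1 + (1 - p) * binom_tail_ge n p i.
Proof.
rewrite !binom_tail_geE big_ord_recl /= bin0 subn0 expr0 mulr1.
under eq_bigr do rewrite /bump /= add1n binS natrD.
have -> : \sum_(k < n.+1) (i <= k.+1)%N%:R * ('C(n, k.+1)%:R + 'C(n, k)%:R)
            * p ^+ k.+1 * (1 - p) ^+ (n - k)
  = \sum_(k < n.+1) (i <= k.+1)%N%:R * 'C(n, k.+1)%:R * p ^+ k.+1 * (1 - p) ^+ (n - k)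
    + p * \sum_(k < n.+1) (i.-1 <= k)%N%:R * 'C(n, k)%:R * p ^+ k * (1 - p) ^+ (n - k).
  rewrite big_distrr -big_split /=; apply: eq_bigr => k _.
  have -> : (i.-1 <= k)%N = (i <= k.+1)%N by case: i.
  by rewrite exprS; ring.
rewrite addrA addrC; congr (_ + _).
rewrite big_ord_recr /= bin_small // mulr0 !mul0r addr0.
rewrite big_distrr big_ord_recl /= bin0 subn0.
congr (_ + _); first by rewrite expr0 exprS; ring.
apply: eq_bigr => k _; rewrite /bump /= add1n.
by rewrite -(subnSK (ltn_ord k)) [(1 - p) ^+ _.+1]exprS; ring.
Qed.

Lemma pbin_tail_nseq n (p : R) i : pbin_tail (nseq n p) i = binom_tail_ge n p i.
Proof.
elim: n i => [|n IH] i; last by rewrite binom_tail_geS /= !IH.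
by rewrite binom_tail_geE big_ord1 bin0 subnn !expr0 !mulr1; case: i.
Qed.

End BinomialTail.

Lemma powR_invnK (R : realType) (x : R) k :
  (0 < k)%N -> 0 <= x -> powR x k%:R^-1 ^+ k = x.
Proof.
move=> k_gt0 x_ge0; rewrite -powR_mulrn ?powR_ge0 // -powRrM mulVf ?powRr1 //.
by rewrite pnatr_eq0 -lt0n.
Qed.

Section FailureGeometricMean.
Variables (R : realType) (s : seq R).
Hypotheses (s01 : all is_prob s) (s_sorted : sorted >=%R s).

Definition fail_prod n := \prod_(j < n) (1 - nth 0 s j).

Definition fail_gmean n := powR (fail_prod n) n%:R^-1.

Lemma is_prob_nth j : is_prob (nth 0 s j).
Proof.
have [lt_js|le_sj] := ltnP j (size s); first exact/(allP s01)/mem_nth.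
by rewrite nth_default // /is_prob lexx ler01.
Qed.

Lemma nth_nonincr j k : (j <= k)%N -> nth 0 s k <= nth 0 s j.
Proof.
move=> le_jk; have [lt_ks|le_sk] := ltnP k (size s); last first.
  by rewrite (nth_default 0 le_sk); case/andP: (is_prob_nth j).
apply: (sorted_leq_nth ge_trans ge_refl) => //.
by rewrite inE (leq_ltn_trans le_jk).
Qed.

Lemma fail_prod_ge0 n : 0 <= fail_prod n.
Proof. by apply: prodr_ge0 => j _; rewrite subr_ge0; case/andP: (is_prob_nth j). Qed.

Lemma fail_prod_le1 n : fail_prod n <= 1.
Proof.
apply: prodr_ile1 => j _; case/andP: (is_prob_nth j) => sj_ge0 sj_le1.
by rewrite subr_ge0 sj_le1 lerBlDr lerDl.
Qed.

Lemma fail_prodS n : fail_prod n.+1 = fail_prod n * (1 - nth 0 s n).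
Proof. exact: big_ord_recr. Qed.

Lemma fail_gmean_expn n : (0 < n)%N -> fail_gmean n ^+ n = fail_prod n.
Proof. by move=> n_gt0; rewrite powR_invnK ?fail_prod_ge0. Qed.

Lemma fail_gmean_ge0 n : 0 <= fail_gmean n.
Proof. exact: powR_ge0. Qed.

Lemma fail_gmean_le1 n : fail_gmean n <= 1.
Proof.
case: n => [|n]; first by rewrite /fail_gmean invr0 powRr0.
rewrite -(ler_pXn2r (ltn0Sn n)) ?nnegrE ?fail_gmean_ge0 //.
by rewrite fail_gmean_expn // expr1n fail_prod_le1.
Qed.

Lemma fail_gmean_le_nth n : (0 < n)%N -> fail_gmean n <= 1 - nth 0 s n.
Proof.
move=> n_gt0; have := is_prob_nth n; rewrite /is_prob => /andP[_ sn_le1].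
rewrite -(ler_pXn2r n_gt0) ?nnegrE ?fail_gmean_ge0 ?subr_ge0 //.
have -> : (1 - s`_n) ^+ n = \prod_(j < n) (1 - s`_n) by rewrite prodr_const card_ord.
rewrite fail_gmean_expn //.
apply: ler_prod => j _; case/andP: (is_prob_nth j) => _ sj_le1.
by rewrite subr_ge0 sj_le1 lerB // nth_nonincr // ltnW.
Qed.

Lemma fail_gmean_le_succ n : (0 < n)%N -> fail_gmean n <= fail_gmean n.+1.
Proof.
move=> n_gt0; rewrite -(ler_pXn2r (ltn0Sn n)) ?nnegrE ?fail_gmean_ge0 //.
rewrite fail_gmean_expn // fail_prodS -(fail_gmean_expn n_gt0).
by rewrite exprSr ler_wpM2l ?exprn_ge0 ?fail_gmean_ge0 ?fail_gmean_le_nth.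
Qed.

Lemma is_prob_1Bfail_gmean n : is_prob (1 - fail_gmean n).
Proof. by rewrite is_prob1B // /is_prob fail_gmean_ge0 fail_gmean_le1. Qed.

Lemma binom_tail_fail_gmean_SS_le n i : (0 < n)%N ->
  binom_tail_ge n.+1 (1 - fail_gmean n.+1) i.+1 <= binom_tail_ge n (1 - fail_gmean n) i.
Proof.
move=> n_gt0; rewrite -!pbin_tail_nseq.
have gn01 := is_prob_1Bfail_gmean n.
apply: le_trans (pbin_tail_consS_le i gn01 (all_is_prob_nseq n gn01)).
apply: pbin_tail_nseq_homo; rewrite ?is_prob_1Bfail_gmean //.
by rewrite lerB // fail_gmean_le_succ.
Qed.

Lemma binom_tail_fail_gmean_le_S n i : (0 < n)%N ->
  binom_tail_ge n (1 - fail_gmean n) i <= binom_tail_ge n.+1 (1 - fail_gmean n.+1) i.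
Proof.
move=> n_gt0; rewrite -!pbin_tail_nseq.
pose d := powR (fail_prod n) n.+1%:R^-1.
have d_ge0 : 0 <= d by exact: powR_ge0.
have dSn : d ^+ n.+1 = fail_prod n by rewrite powR_invnK ?fail_prod_ge0.
have d_le1 : d <= 1.
  by rewrite -(ler_pXn2r (ltn0Sn n)) ?nnegrE // dSn expr1n fail_prod_le1.
have gn_d : fail_gmean n ^+ n = d ^+ n.+1 by rewrite dSn fail_gmean_expn.
apply: le_trans (pbin_tail_spread i n_gt0 (fail_gmean_ge0 n) _ gn_d) _.
  by rewrite d_ge0 d_le1.
apply: pbin_tail_nseq_homo; rewrite ?is_prob_1Bfail_gmean ?is_prob1B //.
  by rewrite /is_prob d_ge0 d_le1.
rewrite lerB // -(ler_pXn2r (ltn0Sn n)) ?nnegrE ?fail_gmean_ge0 //.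
rewrite fail_gmean_expn // dSn fail_prodS ler_piMr ?fail_prod_ge0 //.
by case/andP: (is_prob_nth n) => sn_ge0 _; rewrite lerBlDr lerDl.
Qed.

End FailureGeometricMean.

Lemma is_prob_sortedF (R : realType) m (F : 'I_m -> R -> R) t :
  (forall k, 0 <= F k t <= 1) -> all is_prob (sortedF F t).
Proof. by move=> F01; apply/allP=> x; rewrite mem_sort => /mapP[k _ ->]; apply: F01. Qed.

Lemma sorted_sortedF (R : realType) m (F : 'I_m -> R -> R) t :
  sorted >=%R (sortedF F t).
Proof. by apply: sort_sorted => x y; rewrite orbC le_total. Qed.

Unset Implicit Arguments.
Theorem lemma7p2 (R : realType) (m : nat) (alpha : R) (F : 'I_m -> R -> R) (t : R) :
  (1 <= m)%N ->
  0 < alpha < 1 ->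
  (forall k x, 0 <= x <= 1 -> 0 <= F k x <= 1) ->
  0 <= t <= 1 ->
  (* non-increasing in i *)
  (forall (l i1 i2 : nat), (1 <= l <= m)%N ->
     (1 <= i1)%N -> (i1 <= i2)%N ->
     (i2%:Z <= Num.floor (alpha * l%:R) + 1)%R ->
     Q F t l i2 <= Q F t l i1) /\
  (* non-increasing in l *)
  (forall (l1 l2 i : nat), (1 <= l1)%N -> (l1 <= l2)%N -> (l2 <= m)%N ->
     (1 <= i)%N ->
     (i%:Z <= Num.floor (alpha * l1%:R) + 1)%R ->
     (i%:Z <= Num.floor (alpha * l2%:R) + 1)%R ->
     Q F t l2 i <= Q F t l1 i).
Proof.
move=> _ _ F01 t01.
have s01 := is_prob_sortedF (fun k => F01 k t t01).
have s_sorted := sorted_sortedF F t.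
pose g := fail_gmean (sortedF F t).
have QE l i : Q F t l i = binom_tail_ge (m - l + i) (1 - g (m - l + i)%N) i by [].
split=> [l i1 i2 _ i1_gt0 le_i12 _ | l1 l2 i _ le_l12 le_l2m i_gt0 _ _].
  have /nonincreasing_seqP homo : forall k, Q F t l k.+2 <= Q F t l k.+1.
    by move=> k; rewrite !QE addnS; apply: binom_tail_fail_gmean_SS_le; rewrite ?addnS.
  rewrite -(prednK i1_gt0) -(prednK (leq_trans i1_gt0 le_i12)).
  by rewrite homo // -!subn1 leq_sub2r.
rewrite !QE; have -> : (m - l1 + i = (m - l2 + i) + (l2 - l1))%N by lia.
have n_gt0 : (0 < m - l2 + i)%N by rewrite addn_gt0 i_gt0 orbT.
move: (m - l2 + i)%N n_gt0 (l2 - l1)%N => n n_gt0 k.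
have /nondecreasing_seqP homo : forall j, binom_tail_ge (n + j) (1 - g (n + j)%N) i
    <= binom_tail_ge (n + j.+1) (1 - g (n + j.+1)%N) i.
  by move=> j; rewrite addnS binom_tail_fail_gmean_le_S // addn_gt0 n_gt0.
by have := homo 0%N k (leq0n k); rewrite addn0.
Qed.
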